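(* Let $\mathcal{C}$ be a covering of a finite set $E$ satisfying the condition (EQU): for every $K\in\mathcal{C}$ and all $x,y\in K$, the number of blocks of $\mathcal{C}$ containing $x$ equals the number of blocks of $\mathcal{C}$ containing $y$. Then $\{N(x):x\in E\}$ forms a partition of $E$, where $N(x)=\bigcap\{K\in\mathcal{C}:x\in K\}$.
   Context: A covering of $E$ is a family of nonempty subsets (blocks) of $E$ with union $E$. ''$\{N(x):x\in E\}$ forms a partition'' means the distinct sets among the $N(x)$ are pairwise disjoint (their union is $E$ since $x\in N(x)$). *)

From mathcomp Require Import all_boot.
Set Implicit Arguments. Unset Strict Implicit. Unset Printing Implicit Defensive.

Definition is_covering (T : finType) (E : {set T}) (C : {set {set T}}) : Prop :=
  (forall K, K \in C -> K != set0 /\ K \subset E) /\ cover C = E.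

Definition deg (T : finType) (C : {set {set T}}) (x : T) : nat :=
  #|[set K in C | x \in K]|.

Definition EQU (T : finType) (C : {set {set T}}) : Prop :=
  forall K, K \in C -> forall x y, x \in K -> y \in K -> deg C x = deg C y.

Definition Nbhd (T : finType) (C : {set {set T}}) (x : T) : {set T} :=
  \bigcap_(K in C | x \in K) K.

From mathcomp Require Import all_boot.

Set Implicit Arguments.
Unset Strict Implicit.
Unset Printing Implicit Defensive.

(* If y lies in N(x), every block containing x contains y; by (EQU) applied to
   a block containing both, x and y lie in equally many blocks, so they lie in
   exactly the same blocks and N(y) = N(x).  Hence the sets N(x) are the
   classes of an equivalence relation on E. *)

Section Neighbourhoods.

Variables (T : finType) (C : {set {set T}}).

Lemma mem_Nbhd x : x \in Nbhd C x.
Proof. by apply/bigcapP => K /andP[]. Qed.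

Lemma Nbhd_sub_block K x : K \in C -> x \in K -> Nbhd C x \subset K.
Proof. by move=> KC xK; apply: bigcap_inf; rewrite KC. Qed.

Lemma Nbhd_sub_cover x : x \in cover C -> Nbhd C x \subset cover C.
Proof.
case/bigcupP=> K KC xK; apply: subset_trans (Nbhd_sub_block KC xK) _.
exact: bigcup_sup.
Qed.

Lemma blocks_sub_of_Nbhd x y :
  y \in Nbhd C x -> [set K in C | x \in K] \subset [set K in C | y \in K].
Proof.
move=> yN; apply/subsetP => K; rewrite !inE => /andP[KC xK].
by rewrite KC (subsetP (Nbhd_sub_block KC xK)).
Qed.

Lemma Nbhd_eq_of_mem x y :
  EQU C -> x \in cover C -> y \in Nbhd C x -> Nbhd C y = Nbhd C x.
Proof.
move=> equC /bigcupP[K KC xK] yN.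
have yK : y \in K by move/subsetP: (Nbhd_sub_block KC xK); apply.
have same_blocks : [set K in C | x \in K] = [set K in C | y \in K].
  apply/eqP; rewrite eqEcard blocks_sub_of_Nbhd //=.
  by have := equC K KC x y xK yK; rewrite /deg => ->.
apply: eq_bigl => K'; move/setP/(_ K'): same_blocks.
by rewrite !inE => ->.
Qed.

End Neighbourhoods.

Theorem proposition21 (T : finType) (E : {set T}) (C : {set {set T}}) :
  is_covering E C -> EQU C ->
  partition [set Nbhd C x | x in E] E.
Proof.
move=> [_ coverC] equC.
have Nbhd_eq x y : x \in E -> y \in Nbhd C x -> Nbhd C y = Nbhd C x.
  by rewrite -coverC; apply: Nbhd_eq_of_mem.
apply/and3P; split.
- apply/eqP/setP => z; apply/bigcupP/idP => [[_ /imsetP[x xE ->] zN]|zE].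
    by rewrite -coverC in xE *; apply: subsetP (Nbhd_sub_cover xE) z zN.
  by exists (Nbhd C z); [apply: imset_f | apply: mem_Nbhd].
- apply/trivIsetP => _ _ /imsetP[x xE ->] /imsetP[y yE ->] neqN.
  apply/pred0P => z /=; apply/negbTE/andP => -[zx zy].
  by move/eqP: neqN; rewrite -(Nbhd_eq x z xE zx) -(Nbhd_eq y z yE zy).
- by apply/imsetP => -[x _ N0]; have := mem_Nbhd C x; rewrite -N0 inE.
Qed.
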